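(* With $S^\pm$ as defined in the context and $P_k$ the projectors of the Veronese sequence, for $0\le k\le 2s-1$ one has $\operatorname{tr}(S^+P_kS^-)\ne0$ and $P_{k+1}=\frac{S^+P_kS^-}{\operatorname{tr}(S^+P_kS^-)}$, and for $1\le k\le 2s$ one has $\operatorname{tr}(S^-P_kS^+)\neq 0$ and $P_{k-1}=\frac{S^-P_kS^+}{\operatorname{tr}(S^-P_kS^+)}$.
   Context: Let $2s\in\mathbb{Z}_{>0}$, $\xi_\pm=\xi^1\pm i\xi^2$ with $\xi_-=\overline{\xi_+}$, $\partial=\frac12(\partial_{\xi^1}-i\partial_{\xi^2})$. Matrix indices run over $0,\dots,2s$. Spin-$s$ matrices: $(\sigma^z)_{ij}=(s-i)\delta_{ij}$, $(\sigma^+)_{ij}=\sqrt{(2s-j+1)j}\,\delta_{i,j-1}$, $(\sigma^-)_{ij}=\sqrt{(2s-i+1)i}\,\delta_{i-1,j}$; $S^+=\frac{1}{1+\xi_+\xi_-}(2\xi_-\sigma^z-\sigma^-+\xi_-^2\sigma^+)$, $S^-=\frac{1}{1+\xi_+\xi_-}(2\xi_+\sigma^z+\xi_+^2\sigma^--\sigma^+)$. Veronese sequence: $(f_0)_j=\sqrt{\binom{2s}{j}}\xi_+^j$, $f_{k+1}=\big(\mathbf 1_{2s+1}-\frac{f_kf_k^\dagger}{f_k^\dagger f_k}\big)\partial f_k$; $P_k=\frac{f_kf_k^\dagger}{f_k^\dagger f_k}$. *)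

From Stdlib Require Import Reals ClassicalEpsilon.
Open Scope R_scope.

Record Cx := mkCx { re : R; im : R }.
Definition Cx0 : Cx := mkCx 0 0.
Definition Cx1 : Cx := mkCx 1 0.
Definition RtoCx (r : R) : Cx := mkCx r 0.
Definition Cxadd (a b : Cx) : Cx := mkCx (re a + re b) (im a + im b).
Definition Cxopp (a : Cx) : Cx := mkCx (- re a) (- im a).
Definition Cxsub (a b : Cx) : Cx := Cxadd a (Cxopp b).
Definition Cxmul (a b : Cx) : Cx :=
  mkCx (re a * re b - im a * im b) (re a * im b + im a * re b).
Definition Cxconj (a : Cx) : Cx := mkCx (re a) (- im a).
Definition Cxinv (a : Cx) : Cx :=
  let n := re a * re a + im a * im a in mkCx (re a / n) (- im a / n).
Definition Cxdiv (a b : Cx) : Cx := Cxmul a (Cxinv b).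
Fixpoint Cxpow (a : Cx) (n : nat) : Cx :=
  match n with O => Cx1 | S m => Cxmul a (Cxpow a m) end.

(* csum n f = f 0 + ... + f n  (n+1 terms) *)
Fixpoint csum (n : nat) (f : nat -> Cx) : Cx :=
  match n with O => f O | S m => Cxadd (csum m f) (f (S m)) end.

(* Vectors / matrices in C^{2s+1}; only indices 0..N (N = 2s) are meaningful. *)
Definition Vec := nat -> Cx.
Definition Mat := nat -> nat -> Cx.

Definition madd (A B : Mat) : Mat := fun i j => Cxadd (A i j) (B i j).
Definition msub (A B : Mat) : Mat := fun i j => Cxsub (A i j) (B i j).
Definition mscal (c : Cx) (A : Mat) : Mat := fun i j => Cxmul c (A i j).
Definition mmul (N : nat) (A B : Mat) : Mat :=
  fun i j => csum N (fun l => Cxmul (A i l) (B l j)).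
Definition mvec (N : nat) (A : Mat) (v : Vec) : Vec :=
  fun i => csum N (fun l => Cxmul (A i l) (v l)).
Definition mtr (N : nat) (A : Mat) : Cx := csum N (fun i => A i i).
Definition idm : Mat := fun i j => if Nat.eqb i j then Cx1 else Cx0.

Definition vnorm2 (N : nat) (v : Vec) : Cx := csum N (fun i => Cxmul (Cxconj (v i)) (v i)).
Definition proj (N : nat) (v : Vec) : Mat :=
  fun i j => Cxdiv (Cxmul (v i) (Cxconj (v j))) (vnorm2 N v).

(* spin-s matrices, N = 2s, s = N/2 *)
Definition sigma_z (N : nat) : Mat :=
  fun i j => if Nat.eqb i j then RtoCx (INR N / 2 - INR i) else Cx0.
Definition sigma_plus (N : nat) : Mat :=
  fun i j => if Nat.eqb (S i) j
             then RtoCx (sqrt ((INR N - INR j + 1) * INR j)) else Cx0.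
Definition sigma_minus (N : nat) : Mat :=
  fun i j => if Nat.eqb i (S j)
             then RtoCx (sqrt ((INR N - INR i + 1) * INR i)) else Cx0.

(* xi^1 = x, xi^2 = y *)
Definition xip (x y : R) : Cx := mkCx x y.
Definition xim (x y : R) : Cx := mkCx x (- y).

Definition S_plus (N : nat) (x y : R) : Mat :=
  mscal (Cxinv (Cxadd Cx1 (Cxmul (xip x y) (xim x y))))
    (madd (msub (mscal (Cxmul (RtoCx 2) (xim x y)) (sigma_z N)) (sigma_minus N))
          (mscal (Cxpow (xim x y) 2) (sigma_plus N))).
Definition S_minus (N : nat) (x y : R) : Mat :=
  mscal (Cxinv (Cxadd Cx1 (Cxmul (xip x y) (xim x y))))
    (msub (madd (mscal (Cxmul (RtoCx 2) (xip x y)) (sigma_z N))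
                (mscal (Cxpow (xip x y) 2) (sigma_minus N)))
          (sigma_plus N)).

(* Partial derivatives of a real function of (xi^1, xi^2): the (unique, when it
   exists) limit, chosen by epsilon. *)
Definition pd1 (g : R -> R -> R) (x y : R) : R :=
  epsilon (inhabits 0) (fun l => derivable_pt_lim (fun t => g t y) x l).
Definition pd2 (g : R -> R -> R) (x y : R) : R :=
  epsilon (inhabits 0) (fun l => derivable_pt_lim (fun t => g x t) y l).

(* Vector-valued functions of (xi^1, xi^2) and the Wirtinger derivative
   partial = 1/2 (d/dxi^1 - i d/dxi^2), applied componentwise. *)
Definition VF := R -> R -> Vec.
Definition wirt (F : VF) : VF :=
  fun x y j =>
    let u := fun a b => re (F a b j) in
    let v := fun a b => im (F a b j) in
    mkCx ((pd1 u x y + pd2 v x y) / 2) ((pd1 v x y - pd2 u x y) / 2).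

Definition f0 (N : nat) : VF :=
  fun x y j => Cxmul (RtoCx (sqrt (Binomial.C N j))) (Cxpow (xip x y) j).
Fixpoint fseq (N k : nat) : VF :=
  match k with
  | O => f0 N
  | S m => fun x y => mvec N (msub idm (proj N (fseq N m x y))) (wirt (fseq N m) x y)
  end.
Definition Pk (N k : nat) (x y : R) : Mat := proj N (fseq N k x y).

(* Write a vector of C^{N+1} (N = 2s) in rescaled coordinates v_i = C(N,i)^{-1/2} q_i.
   There S^+ and S^- act as -rho^{-1} X and rho^{-1} Y, where rho = 1 + |xi|^2 and
   X, Y, Z are first order difference operators satisfying the sl2 relations
   [Z, X] = 2 rho X and [Y, X] = rho Z.  The binomial vector q_0 = (C(N,i) xi^i)_i is a
   lowest weight vector (Y q_0 = 0), so the vectors q_k := X^k q_0 are Z-eigenvectors,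
   Y q_(k+1) = c_k rho^2 q_k with c_k <> 0 for k < N, and, X being minus the adjoint of Y
   for the binomially weighted inner product, consecutive q_k are orthogonal.
   A Wirtinger-derivative computation gives d q_k = rho^-2 q_(k+1) + N conj(xi) rho^-1 q_k,
   so F_k := rho^(-2k) C(N,.)^(-1/2) q_k satisfies dF_k = F_(k+1) + beta_k F_k with
   F_(k+1) orthogonal to F_k: the Gram-Schmidt recursion defining the Veronese sequence
   therefore yields f_k = F_k.  Finally S^+ F_k = -rho F_(k+1), S^- F_(k+1) = c_k rho^-1 F_k
   and S^- = (S^+)^dagger; since A P_v A^dagger = |c|^2 |w|^2 / |v|^2 P_w whenever A v = c w,
   both identities of the theorem follow. *)

From Stdlib Require Import Reals Lra Lia Psatz FunctionalExtensionality Ring.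
From Stdlib Require Import ClassicalEpsilon Classical.
From Coquelicot Require Import Coquelicot.
Open Scope R_scope.

Lemma Cx_ext (a b : Cx) : re a = re b -> im a = im b -> a = b.
Proof. destruct a, b; simpl; intros; subst; reflexivity. Qed.

Ltac cx_unfold :=
  unfold Cxsub, Cxadd, Cxopp, Cxmul, Cxconj, Cxdiv, Cxinv, RtoCx, Cx0, Cx1, xip, xim in *.
Ltac cx_field := cx_unfold; apply Cx_ext; simpl; field.
Ltac cx_ring := cx_unfold; apply Cx_ext; simpl; ring.

Lemma Cx_ring_theory : ring_theory Cx0 Cx1 Cxadd Cxmul Cxsub Cxopp (@eq Cx).
Proof. constructor; intros; cx_ring. Qed.
Add Ring CxRing : Cx_ring_theory.

Declare Scope cx_scope. Delimit Scope cx_scope with cx.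
Infix "+" := Cxadd : cx_scope.
Infix "-" := Cxsub : cx_scope.
Infix "*" := Cxmul : cx_scope.
Notation "- a" := (Cxopp a) : cx_scope.

Definition natC (n : nat) : Cx := RtoCx (INR n).
Definition Cx2 : Cx := (Cx1 + Cx1)%cx.

Lemma natC_S n : natC (S n) = (natC n + Cx1)%cx.
Proof. unfold natC; rewrite S_INR; cx_ring. Qed.
Lemma natC_0 : natC 0 = Cx0.
Proof. unfold natC; simpl; cx_ring. Qed.

Lemma conj_add a b : Cxconj (a + b)%cx = (Cxconj a + Cxconj b)%cx.
Proof. cx_ring. Qed.
Lemma conj_sub a b : Cxconj (a - b)%cx = (Cxconj a - Cxconj b)%cx.
Proof. cx_ring. Qed.
Lemma conj_mul a b : Cxconj (a * b)%cx = (Cxconj a * Cxconj b)%cx.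
Proof. cx_ring. Qed.
Lemma conj_conj a : Cxconj (Cxconj a) = a.
Proof. cx_ring. Qed.
Lemma conj_0 : Cxconj Cx0 = Cx0. Proof. cx_ring. Qed.
Lemma conj_1 : Cxconj Cx1 = Cx1. Proof. cx_ring. Qed.
Lemma conj_natC n : Cxconj (natC n) = natC n.
Proof. unfold natC. cx_ring. Qed.

Lemma Cxinv_l a : a <> Cx0 -> (Cxinv a * a = Cx1)%cx.
Proof.
  intro H. assert (re a * re a + im a * im a <> 0).
  { intro E. apply H. apply Cx_ext; simpl; nra. }
  cx_unfold. apply Cx_ext; simpl; field; assumption.
Qed.

Lemma mul_nz a b : a <> Cx0 -> b <> Cx0 -> (a * b)%cx <> Cx0.
Proof.
  intros Ha Hb E. apply Hb. transitivity ((Cxinv a * a) * b)%cx.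
  - rewrite Cxinv_l by exact Ha. ring.
  - transitivity (Cxinv a * (a * b))%cx. ring. rewrite E. ring.
Qed.

Lemma opp_nz a : a <> Cx0 -> (- a)%cx <> Cx0.
Proof. intros H E. apply H. transitivity (- (- a))%cx. ring. rewrite E. ring. Qed.

Lemma conj_nz a : a <> Cx0 -> Cxconj a <> Cx0.
Proof. intros H E. apply H. rewrite <- (conj_conj a), E. cx_ring. Qed.

Lemma inv_nz a : a <> Cx0 -> Cxinv a <> Cx0.
Proof.
  intros H E. pose proof (Cxinv_l a H) as F. rewrite E in F.
  apply (f_equal re) in F. simpl in F. lra.
Qed.

(* To prove a = b it suffices to write a - b as a combination of two vanishing
   differences u - v and s - t; used to feed binomial recurrences to [ring]. *)
Lemma eq_by_vanishing_combination (a b c d u v s t : Cx) : u = v -> s = t ->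
  (a - b = c * (u - v) + d * (s - t))%cx -> a = b.
Proof.
  intros -> -> H. assert (E : (a - b = Cx0)%cx) by (rewrite H; ring).
  assert (E2 : a = (a - b + b)%cx) by ring. rewrite E2, E. ring.
Qed.

Lemma csum_ext n f g : (forall i, (i <= n)%nat -> f i = g i) -> csum n f = csum n g.
Proof.
  induction n; intro H; simpl. apply H; lia.
  rewrite IHn by (intros; apply H; lia). rewrite H by lia. reflexivity.
Qed.
Lemma csum_add n f g : csum n (fun i => f i + g i)%cx = (csum n f + csum n g)%cx.
Proof. induction n; simpl. reflexivity. rewrite IHn. ring. Qed.
Lemma csum_sub n f g : csum n (fun i => f i - g i)%cx = (csum n f - csum n g)%cx.
Proof. induction n; simpl. reflexivity. rewrite IHn. ring. Qed.
Lemma csum_scal n f a : csum n (fun i => a * f i)%cx = (a * csum n f)%cx.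
Proof. induction n; simpl. reflexivity. rewrite IHn. ring. Qed.
Lemma csum_opp n f : (- csum n f)%cx = csum n (fun i => - f i)%cx.
Proof. induction n; simpl. reflexivity. rewrite <- IHn. ring. Qed.
Lemma csum_conj n f : Cxconj (csum n f) = csum n (fun i => Cxconj (f i)).
Proof. induction n; simpl. reflexivity. rewrite conj_add, IHn. reflexivity. Qed.
Lemma csum_lin3 n f g h a b c :
  csum n (fun i => a * f i + b * g i + c * h i)%cx =
  (a * csum n f + b * csum n g + c * csum n h)%cx.
Proof. induction n; simpl. reflexivity. rewrite IHn. ring. Qed.
Lemma csum_zero n f : (forall i, (i <= n)%nat -> f i = Cx0) -> csum n f = Cx0.
Proof.
  induction n; intro H; simpl. apply H; lia.
  rewrite IHn, H by (intros; try apply H; lia). ring.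
Qed.

Lemma csum_shift n f : csum (S n) f = (f O + csum n (fun i => f (S i)))%cx.
Proof.
  induction n. simpl. reflexivity.
  change (csum (S (S n)) f) with (csum (S n) f + f (S (S n)))%cx. rewrite IHn. simpl. ring.
Qed.

Lemma csum_delta n i f : csum n (fun l => if Nat.eqb i l then f l else Cx0) =
  if (i <=? n)%nat then f i else Cx0.
Proof.
  induction n; simpl.
  - destruct (Nat.eqb_spec i 0), (Nat.leb_spec i 0); subst; try lia; reflexivity.
  - rewrite IHn. destruct (Nat.eqb_spec i (S n)), (Nat.leb_spec i n), (Nat.leb_spec i (S n));
    subst; try lia; ring.
Qed.

Lemma csum_idm n i f : (i <= n)%nat -> csum n (fun l => idm i l * f l)%cx = f i.
Proof.
  intro H. transitivity (csum n (fun l => if Nat.eqb i l then f l else Cx0)).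
  - apply csum_ext. intros l _. unfold idm. destruct (Nat.eqb i l); ring.
  - rewrite csum_delta. destruct (Nat.leb_spec i n); [reflexivity | lia].
Qed.

Definition bin (N i : nat) : R := if (i <=? N)%nat then Binomial.C N i else 0.
Definition binC N i : Cx := RtoCx (bin N i).

Lemma bin_pos N i : (i <= N)%nat -> 0 < bin N i.
Proof.
  intro H. unfold bin. destruct (Nat.leb_spec i N); try lia. unfold Binomial.C.
  apply Rdiv_lt_0_compat. apply lt_0_INR, Factorial.lt_O_fact.
  apply Rmult_lt_0_compat; apply lt_0_INR, Factorial.lt_O_fact.
Qed.

Lemma bin_out N i : (N < i)%nat -> bin N i = 0.
Proof. intro H. unfold bin. destruct (Nat.leb_spec i N); try lia. reflexivity. Qed.

(* (N - i) C(N,i) = (i + 1) C(N,i+1), valid for all i thanks to the extension by 0. *)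
Lemma bin_ratio N i : (INR N - INR i) * bin N i = (INR i + 1) * bin N (S i).
Proof.
  unfold bin. destruct (Nat.leb_spec i N), (Nat.leb_spec (S i) N); try lia.
  - rewrite Binomial.pascal_step3 by lia. rewrite minus_INR by lia. rewrite S_INR. field.
    pose proof (pos_INR i); lra.
  - assert (i = N) by lia. subst. ring.
  - ring.
Qed.

Lemma binC_ratio N i : ((natC N - natC i) * binC N i = (natC i + Cx1) * binC N (S i))%cx.
Proof.
  unfold natC, binC. pose proof (bin_ratio N i). cx_unfold. apply Cx_ext; simpl; try ring. lra.
Qed.

(** * The rescaled spin operators and their sl2 relations *)

(* In the coordinates v_i = C(N,i)^{-1/2} p_i, the matrices sigma^-, sigma^+ and
   2 sigma^z act on p as [Jm N], [Jp] and [Jz N]. *)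
Definition shift (p : Vec) (i : nat) : Cx := match i with O => Cx0 | S j => p j end.
Definition Jm (N : nat) (p : Vec) : Vec := fun i => ((natC N - natC i + Cx1) * shift p i)%cx.
Definition Jp (p : Vec) : Vec := fun i => ((natC i + Cx1) * p (S i))%cx.
Definition Jz (N : nat) (p : Vec) : Vec := fun i => ((natC N - Cx2 * natC i) * p i)%cx.

(* rho = 1 + |xi|^2 and the operators X = -rho S^+, Y = rho S^-, Z (rescaled). *)
Definition rhoC x y := (Cx1 + xip x y * xim x y)%cx.
Definition Xop N x y (p : Vec) : Vec := fun i =>
  (Jm N p i - xim x y * Jz N p i - xim x y * xim x y * Jp p i)%cx.
Definition Yop N x y (p : Vec) : Vec := fun i =>
  (xip x y * xip x y * Jm N p i + xip x y * Jz N p i - Jp p i)%cx.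
Definition Zop N x y (p : Vec) : Vec := fun i =>
  (- Cx2 * xip x y * Jm N p i - (Cx1 - xip x y * xim x y) * Jz N p i
   - Cx2 * xim x y * Jp p i)%cx.

Lemma comm_ZX N x y p i :
  (Zop N x y (Xop N x y p) i - Xop N x y (Zop N x y p) i =
   Cx2 * rhoC x y * Xop N x y p i)%cx.
Proof.
  destruct i as [|[|i]]; unfold Zop, Xop, Jm, Jp, Jz, rhoC, Cx2; simpl shift;
    rewrite ?natC_S, ?natC_0; ring.
Qed.

Lemma comm_YX N x y p i :
  (Yop N x y (Xop N x y p) i - Xop N x y (Yop N x y p) i = rhoC x y * Zop N x y p i)%cx.
Proof.
  destruct i as [|[|i]]; unfold Yop, Zop, Xop, Jm, Jp, Jz, rhoC, Cx2; simpl shift;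
    rewrite ?natC_S, ?natC_0; ring.
Qed.

Lemma Xop_ext N x y p p' : (forall i, p i = p' i) -> forall j, Xop N x y p j = Xop N x y p' j.
Proof. intros H j. unfold Xop, Jm, Jz, Jp, shift. destruct j; rewrite ?H; reflexivity. Qed.
Lemma Yop_ext N x y p p' : (forall i, p i = p' i) -> forall j, Yop N x y p j = Yop N x y p' j.
Proof. intros H j. unfold Yop, Jm, Jz, Jp, shift. destruct j; rewrite ?H; reflexivity. Qed.

Lemma Xop_lin N x y p p' c d j :
  Xop N x y (fun i => c * p i + d * p' i)%cx j = (c * Xop N x y p j + d * Xop N x y p' j)%cx.
Proof. unfold Xop, Jm, Jz, Jp, shift. destruct j; ring. Qed.
Lemma Xop_scal N x y p c j : Xop N x y (fun i => c * p i)%cx j = (c * Xop N x y p j)%cx.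
Proof. unfold Xop, Jm, Jz, Jp, shift. destruct j; ring. Qed.

Lemma Xop_supp N x y p : (forall i, (N < i)%nat -> p i = Cx0) ->
  forall i, (N < i)%nat -> Xop N x y p i = Cx0.
Proof.
  intros H i Hi. unfold Xop, Jm, Jz, Jp. destruct i as [|j]; [lia|]. simpl shift.
  rewrite (H (S j)), (H (S (S j))) by lia.
  destruct (Nat.eq_dec j N) as [->|Hj].
  - replace (natC N - natC (S N) + Cx1)%cx with Cx0 by (rewrite natC_S; ring). ring.
  - rewrite (H j) by lia. ring.
Qed.

(** * The vectors q_k = X^k q_0 *)

(* q_0 is the rescaled binomial vector (C(N,i) xi^i)_i, i.e. the rescaled f_0. *)
Definition q0 N x y : Vec := fun i => (binC N i * Cxpow (xip x y) i)%cx.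

Fixpoint qk N x y (k : nat) : Vec :=
  match k with O => q0 N x y | S m => Xop N x y (qk N x y m) end.

Lemma Y_q0 N x y i : Yop N x y (q0 N x y) i = Cx0.
Proof.
  unfold Yop, Jm, Jz, Jp, q0. destruct i as [|j]; simpl shift; simpl Cxpow.
  - pose proof (binC_ratio N 0) as H. rewrite natC_0 in *.
    eapply eq_by_vanishing_combination with (c := xip x y) (d := Cx0) (s := Cx0) (t := Cx0);
      [exact H | reflexivity | ring].
  - pose proof (binC_ratio N j) as H1. pose proof (binC_ratio N (S j)) as H2.
    rewrite natC_S in *.
    eapply eq_by_vanishing_combination with (c := (xip x y * xip x y * Cxpow (xip x y) j)%cx)
        (d := (xip x y * xip x y * Cxpow (xip x y) j)%cx);
      [exact H1 | exact H2 | unfold Cx2; ring].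
Qed.

Lemma Z_q0 N x y i : Zop N x y (q0 N x y) i = (- natC N * rhoC x y * q0 N x y i)%cx.
Proof.
  unfold Zop, Jm, Jz, Jp, q0, rhoC. destruct i as [|j]; simpl shift; simpl Cxpow.
  - pose proof (binC_ratio N 0) as H. rewrite natC_0 in *.
    eapply eq_by_vanishing_combination
      with (c := (Cx2 * xim x y * xip x y)%cx) (d := Cx0) (s := Cx0) (t := Cx0);
      [exact H | reflexivity | unfold Cx2; ring].
  - pose proof (binC_ratio N j) as H1. pose proof (binC_ratio N (S j)) as H2.
    rewrite natC_S in *.
    eapply eq_by_vanishing_combination with (c := (- Cx2 * xip x y * Cxpow (xip x y) j)%cx)
        (d := (Cx2 * xim x y * xip x y * xip x y * Cxpow (xip x y) j)%cx);
      [exact H1 | exact H2 | unfold Cx2; ring].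
Qed.

Lemma qk_supp N x y k i : (N < i)%nat -> qk N x y k i = Cx0.
Proof.
  revert i; induction k; intros i Hi; simpl.
  - unfold q0, binC. rewrite bin_out by exact Hi. cx_ring.
  - apply Xop_supp; assumption.
Qed.

(* Each X raises the Z-weight by 2 rho. *)
Lemma Z_qk N x y k i :
  Zop N x y (qk N x y k) i = ((Cx2 * natC k - natC N) * rhoC x y * qk N x y k i)%cx.
Proof.
  revert i; induction k; intro i.
  - simpl. rewrite Z_q0, natC_0. ring.
  - simpl qk. pose proof (comm_ZX N x y (qk N x y k) i) as E.
    assert (E2 : Zop N x y (Xop N x y (qk N x y k)) i =
      (Xop N x y (Zop N x y (qk N x y k)) i + Cx2 * rhoC x y * Xop N x y (qk N x y k) i)%cx).
    { rewrite <- E. ring. }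
    rewrite E2, (Xop_ext N x y _ _ IHk), Xop_scal, natC_S. unfold Cx2. ring.
Qed.

(* The constant c_k in Y q_(k+1) = c_k rho^2 q_k. *)
Definition cY (N k : nat) : Cx := (- (natC k + Cx1) * (natC N - natC k))%cx.

Lemma cY_nz N k : (k < N)%nat -> cY N k <> Cx0.
Proof.
  intros H E. apply (f_equal re) in E. unfold cY, natC in E. simpl in E.
  apply lt_INR in H. pose proof (pos_INR k). nra.
Qed.

Lemma Y_qk N x y k i :
  Yop N x y (qk N x y (S k)) i = (cY N k * rhoC x y * rhoC x y * qk N x y k i)%cx.
Proof.
  revert i; induction k; intro i.
  - simpl. pose proof (comm_YX N x y (q0 N x y) i) as E.
    assert (E2 : Yop N x y (Xop N x y (q0 N x y)) i =
      (Xop N x y (Yop N x y (q0 N x y)) i + rhoC x y * Zop N x y (q0 N x y) i)%cx).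
    { rewrite <- E. ring. }
    rewrite E2, Z_q0. rewrite (Xop_ext N x y _ (fun i => (Cx0 * q0 N x y i)%cx)).
    + rewrite Xop_scal. unfold cY. rewrite natC_0. ring.
    + intro. rewrite Y_q0. ring.
  - change (qk N x y (S (S k))) with (Xop N x y (qk N x y (S k))).
    pose proof (comm_YX N x y (qk N x y (S k)) i) as E.
    assert (E2 : Yop N x y (Xop N x y (qk N x y (S k))) i =
      (Xop N x y (Yop N x y (qk N x y (S k))) i + rhoC x y * Zop N x y (qk N x y (S k)) i)%cx).
    { rewrite <- E. ring. }
    rewrite E2, Z_qk, (Xop_ext N x y _ _ IHk), Xop_scal.
    simpl qk. unfold cY. rewrite !natC_S. unfold Cx2. ring.
Qed.

Lemma rhoC_nz x y : rhoC x y <> Cx0.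
Proof. intro E. apply (f_equal re) in E. unfold rhoC in E. simpl in E. nra. Qed.

(* The vectors q_0, ..., q_N do not vanish: Y q_(k+1) is a nonzero multiple of q_k. *)
Lemma qk_nz N x y k : (k <= N)%nat -> exists l, (l <= N)%nat /\ qk N x y k l <> Cx0.
Proof.
  induction k; intro Hk.
  - exists 0%nat. split. lia. simpl. unfold q0, binC. simpl. intro E. apply (f_equal re) in E.
    simpl in E. pose proof (bin_pos N 0 ltac:(lia)). nra.
  - destruct (IHk ltac:(lia)) as [l0 [Hl0 Hq]].
    apply NNPP. intro Hn.
    assert (Z : forall l, qk N x y (S k) l = Cx0).
    { intro l. destruct (Nat.le_gt_cases l N) as [Hl|Hl].
      - apply NNPP. intro E. apply Hn. exists l. auto.
      - apply qk_supp; exact Hl. }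
    pose proof (Y_qk N x y k l0) as Y.
    rewrite (Yop_ext N x y _ (fun _ => Cx0) Z) in Y.
    replace (Yop N x y (fun _ => Cx0) l0) with Cx0 in Y
      by (unfold Yop, Jm, Jz, Jp; destruct l0; simpl; ring).
    symmetry in Y. revert Y.
    apply mul_nz; [|exact Hq]. apply mul_nz; [|apply rhoC_nz].
    apply mul_nz; [apply cY_nz; lia | apply rhoC_nz].
Qed.

(** * The binomially weighted inner product; orthogonality of q_k and q_(k+1) *)

Definition wt N i : Cx := RtoCx (/ bin N i).
Definition wip N (p q : Vec) : Cx := csum N (fun i => Cxconj (p i) * wt N i * q i)%cx.

Lemma wt_ratio N i : (i < N)%nat ->
  (wt N (S i) * (natC N - natC i) = (natC i + Cx1) * wt N i)%cx.
Proof.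
  intro H. pose proof (bin_ratio N i) as E.
  assert (0 < bin N i) by (apply bin_pos; lia). assert (0 < bin N (S i)) by (apply bin_pos; lia).
  unfold wt, natC. cx_unfold. apply Cx_ext; simpl. 2: ring.
  transitivity ((INR N - INR i) * bin N i / (bin N i * bin N (S i))).
  field; lra. rewrite E. field. lra.
Qed.

Lemma wip_scal_l N p q c : wip N (fun i => c * p i)%cx q = (Cxconj c * wip N p q)%cx.
Proof. unfold wip. rewrite <- csum_scal. apply csum_ext. intros. rewrite conj_mul. ring. Qed.

Lemma wip_ext_l N p p' q : (forall i, p i = p' i) -> wip N p q = wip N p' q.
Proof. intro H. unfold wip. apply csum_ext. intros. rewrite H. reflexivity. Qed.

Lemma Jm_adjoint N p q : p (S N) = Cx0 -> wip N p (Jm N q) = wip N (Jp p) q.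
Proof.
  intro Hp. unfold wip, Jm, Jp. destruct N as [|n].
  - simpl. rewrite Hp. cx_ring.
  - rewrite csum_shift. simpl (csum (S n) _). simpl shift. rewrite Hp.
    rewrite (csum_ext n _ (fun i => (Cxconj ((natC i + Cx1) * p (S i)) * wt (S n) i * q i)%cx)).
    + rewrite conj_mul, conj_0. ring.
    + intros i Hi. pose proof (wt_ratio (S n) i ltac:(lia)) as W.
      rewrite conj_mul, conj_add, conj_natC, conj_1, (natC_S i).
      transitivity (Cxconj (p (S i)) * (wt (S n) (S i) * (natC (S n) - natC i)) * q i)%cx.
      * ring.
      * rewrite W. ring.
Qed.

Lemma Jp_adjoint N p q : q (S N) = Cx0 -> wip N p (Jp q) = wip N (Jm N p) q.
Proof.
  intro Hq. unfold wip, Jm, Jp. destruct N as [|n].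
  - simpl. rewrite Hq. cx_ring.
  - symmetry. rewrite csum_shift. change (csum (S n) ?f) with (csum n f + f (S n))%cx.
    cbv beta. simpl shift. rewrite Hq.
    rewrite (csum_ext n _ (fun i => (Cxconj (p i) * wt (S n) i * ((natC i + Cx1) * q (S i)))%cx)).
    + rewrite conj_mul, conj_0. ring.
    + intros i Hi. pose proof (wt_ratio (S n) i ltac:(lia)) as W.
      rewrite conj_mul, conj_add, conj_sub, !conj_natC, conj_1, (natC_S i).
      transitivity (Cxconj (p i) * (wt (S n) (S i) * (natC (S n) - natC i)) * q (S i))%cx.
      * ring.
      * rewrite W. ring.
Qed.

Lemma Jz_adjoint N p q : wip N p (Jz N q) = wip N (Jz N p) q.
Proof.
  unfold wip, Jz. apply csum_ext. intros i _.
  rewrite conj_mul, conj_sub, conj_mul, !conj_natC. unfold Cx2. rewrite conj_add, conj_1. ring.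
Qed.

Lemma X_adjoint N x y p q : p (S N) = Cx0 -> q (S N) = Cx0 ->
  wip N p (Xop N x y q) = (- wip N (Yop N x y p) q)%cx.
Proof.
  intros Hp Hq.
  transitivity (Cx1 * wip N p (Jm N q) + (- xim x y) * wip N p (Jz N q)
      + (- (xim x y * xim x y)) * wip N p (Jp q))%cx.
  - unfold wip. rewrite <- csum_lin3. apply csum_ext. intros i _. unfold Xop. ring.
  - rewrite Jm_adjoint, Jz_adjoint, Jp_adjoint by assumption.
    unfold wip. rewrite <- csum_lin3, csum_opp. apply csum_ext. intros i _.
    unfold Yop. rewrite !conj_sub, conj_add, !conj_mul.
    replace (Cxconj (xip x y)) with (xim x y) by cx_ring. ring.
Qed.

Lemma qk_orthogonal N x y k : wip N (qk N x y k) (qk N x y (S k)) = Cx0.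
Proof.
  induction k.
  - simpl. rewrite X_adjoint by (apply qk_supp with (k := O); lia).
    rewrite (wip_ext_l N _ (fun i => Cx0 * q0 N x y i)%cx).
    + rewrite wip_scal_l, conj_0. ring.
    + intro i. rewrite Y_q0. ring.
  - change (qk N x y (S (S k))) with (Xop N x y (qk N x y (S k))).
    rewrite X_adjoint by (apply qk_supp; lia).
    rewrite (wip_ext_l N _ (fun i => (cY N k * rhoC x y * rhoC x y) * qk N x y k i)%cx).
    + rewrite wip_scal_l, IHk. ring.
    + intro i. apply Y_qk.
Qed.

(** * A calculus of Wirtinger derivatives *)

Lemma derivable_pt_lim_ext f g x l l' : (forall t, f t = g t) -> l = l' ->
  derivable_pt_lim f x l -> derivable_pt_lim g x l'.
Proof.
  intros H <- D. replace g with f. exact D. apply functional_extensionality. exact H.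
Qed.

Definition HasPartials (F Fx Fy : R -> R -> Cx) := forall x y,
  derivable_pt_lim (fun t => re (F t y)) x (re (Fx x y)) /\
  derivable_pt_lim (fun t => im (F t y)) x (im (Fx x y)) /\
  derivable_pt_lim (fun t => re (F x t)) y (re (Fy x y)) /\
  derivable_pt_lim (fun t => im (F x t)) y (im (Fy x y)).

Definition wirt_of (Fx Fy : R -> R -> Cx) x y : Cx :=
  (mkCx (/2) 0 * (Fx x y - mkCx 0 1 * Fy x y))%cx.
Definition HasW (F D : R -> R -> Cx) :=
  exists Fx Fy, HasPartials F Fx Fy /\ forall x y, D x y = wirt_of Fx Fy x y.

Lemma HasPartials_add F Fx Fy G Gx Gy : HasPartials F Fx Fy -> HasPartials G Gx Gy ->
  HasPartials (fun x y => F x y + G x y)%cx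
    (fun x y => Fx x y + Gx x y)%cx (fun x y => Fy x y + Gy x y)%cx.
Proof.
  intros HF HG x y. destruct (HF x y) as (A1&A2&A3&A4). destruct (HG x y) as (B1&B2&B3&B4).
  simpl. repeat split; apply derivable_pt_lim_plus; assumption.
Qed.

Lemma HasPartials_mul F Fx Fy G Gx Gy : HasPartials F Fx Fy -> HasPartials G Gx Gy ->
  HasPartials (fun x y => F x y * G x y)%cx (fun x y => Fx x y * G x y + F x y * Gx x y)%cx
      (fun x y => Fy x y * G x y + F x y * Gy x y)%cx.
Proof.
  intros HF HG x y. destruct (HF x y) as (A1&A2&A3&A4). destruct (HG x y) as (B1&B2&B3&B4).
  simpl. repeat split; (eapply derivable_pt_lim_ext; [intro; reflexivity| |
    first [apply derivable_pt_lim_minus | apply derivable_pt_lim_plus];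
    apply derivable_pt_lim_mult; eassumption]); simpl; ring.
Qed.

Lemma HasW_ext F D D' : HasW F D -> (forall x y, D x y = D' x y) -> HasW F D'.
Proof. intros (Fx&Fy&HF&EF) E. exists Fx, Fy. split; auto. intros; rewrite <- E; auto. Qed.

Lemma HasW_extF F F' D : (forall x y, F x y = F' x y) -> HasW F D -> HasW F' D.
Proof.
  intros E H. replace F' with F. exact H.
  apply functional_extensionality; intro; apply functional_extensionality; intro; apply E.
Qed.

Lemma HasW_add F DF G DG : HasW F DF -> HasW G DG ->
  HasW (fun x y => F x y + G x y)%cx (fun x y => DF x y + DG x y)%cx.
Proof.
  intros (Fx&Fy&HF&EF) (Gx&Gy&HG&EG). eexists; eexists; split.
  apply HasPartials_add; eassumption. intros x y. rewrite EF, EG. unfold wirt_of. ring.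
Qed.

Lemma HasW_mul F DF G DG : HasW F DF -> HasW G DG ->
  HasW (fun x y => F x y * G x y)%cx (fun x y => DF x y * G x y + F x y * DG x y)%cx.
Proof.
  intros (Fx&Fy&HF&EF) (Gx&Gy&HG&EG). eexists; eexists; split.
  apply HasPartials_mul; eassumption. intros x y. rewrite EF, EG. unfold wirt_of. ring.
Qed.

Lemma HasW_const c : HasW (fun _ _ => c) (fun _ _ => Cx0).
Proof.
  exists (fun _ _ => Cx0), (fun _ _ => Cx0). split.
  - intros x y. simpl. repeat split; apply derivable_pt_lim_const.
  - intros. unfold wirt_of. cx_ring.
Qed.

Lemma HasW_cmul c F DF : HasW F DF -> HasW (fun x y => c * F x y)%cx (fun x y => c * DF x y)%cx.
Proof.
  intros HF. eapply HasW_ext. apply HasW_mul. apply HasW_const. exact HF. intros; simpl; ring.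
Qed.

Lemma HasW_sub F DF G DG : HasW F DF -> HasW G DG ->
  HasW (fun x y => F x y - G x y)%cx (fun x y => DF x y - DG x y)%cx.
Proof.
  intros HF HG.
  apply (HasW_extF (fun x y => F x y + (- Cx1) * G x y)%cx); [intros; ring|].
  eapply HasW_ext. apply HasW_add. exact HF. apply HasW_cmul. exact HG.
  intros; simpl; ring.
Qed.

Lemma HasW_xi : HasW xip (fun _ _ => Cx1).
Proof.
  exists (fun _ _ => Cx1), (fun _ _ => mkCx 0 1). split.
  - intros x y. unfold xip. simpl.
    repeat split; try apply derivable_pt_lim_id; apply derivable_pt_lim_const.
  - intros. unfold wirt_of. cx_field.
Qed.

Lemma HasW_xibar : HasW xim (fun _ _ => Cx0).
Proof.
  exists (fun _ _ => Cx1), (fun _ _ => mkCx 0 (-1)). split.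
  - intros x y. unfold xim. simpl.
    repeat split; try apply derivable_pt_lim_id; try apply derivable_pt_lim_const.
    apply (derivable_pt_lim_ext (fun t => 0 - t) _ y (0 - 1)); [intro; ring | ring |].
    apply derivable_pt_lim_minus; [apply derivable_pt_lim_const | apply derivable_pt_lim_id].
  - intros. unfold wirt_of. cx_field.
Qed.

Lemma HasW_xi_pow m :
  HasW (fun x y => Cxpow (xip x y) (S m)) (fun x y => natC (S m) * Cxpow (xip x y) m)%cx.
Proof.
  induction m.
  - simpl. eapply HasW_ext. apply HasW_mul. apply HasW_xi. apply HasW_const.
    intros; simpl. rewrite natC_S, natC_0. ring.
  - change (fun x y => Cxpow (xip x y) (S (S m)))
      with (fun x y => xip x y * Cxpow (xip x y) (S m))%cx.
    eapply HasW_ext. apply HasW_mul. apply HasW_xi. exact IHm.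
    intros; simpl. rewrite (natC_S (S m)). ring.
Qed.

Definition rho (x y : R) := 1 + (x*x + y*y).
Definition rinv (x y : R) : Cx := RtoCx (/ rho x y).

Lemma rho_pos x y : 0 < rho x y.
Proof. unfold rho. nra. Qed.

Lemma rinv_rho x y : (rinv x y * rhoC x y = Cx1)%cx.
Proof.
  unfold rinv, rhoC. pose proof (rho_pos x y). unfold rho in *.
  cx_unfold; apply Cx_ext; simpl; field; lra.
Qed.

Lemma rinv_nz x y : rinv x y <> Cx0.
Proof.
  intro E. pose proof (rinv_rho x y) as F. rewrite E in F.
  apply (f_equal re) in F. simpl in F. lra.
Qed.

Lemma HasW_rinv : HasW rinv (fun x y => - xim x y * rinv x y * rinv x y)%cx.
Proof.
  exists (fun x y => RtoCx (- 2 * x / (rho x y * rho x y))),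
         (fun x y => RtoCx (- 2 * y / (rho x y * rho x y))). split.
  - intros x y. unfold rinv, RtoCx. simpl. pose proof (rho_pos x y) as P. unfold rho in *.
    repeat split; try apply derivable_pt_lim_const;
      apply is_derive_Reals; auto_derive; try nra; field; nra.
  - intros. unfold wirt_of, rinv. pose proof (rho_pos x y). cx_field; lra.
Qed.

(* Uniqueness of derivatives: a Wirtinger derivative in the sense of [HasW] is the
   one computed by [wirt]. *)
Lemma pd1_eq g x y l : derivable_pt_lim (fun t => g t y) x l -> pd1 g x y = l.
Proof.
  intro H. unfold pd1. pose proof (epsilon_spec (inhabits 0)
     (fun l => derivable_pt_lim (fun t => g t y) x l) (ex_intro _ l H)) as E. simpl in E.
  eapply uniqueness_limite; eassumption.
Qed.

Lemma pd2_eq g x y l : derivable_pt_lim (fun t => g x t) y l -> pd2 g x y = l.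
Proof.
  intro H. unfold pd2. pose proof (epsilon_spec (inhabits 0)
     (fun l => derivable_pt_lim (fun t => g x t) y l) (ex_intro _ l H)) as E. simpl in E.
  eapply uniqueness_limite; eassumption.
Qed.

Lemma wirt_HasW (V : VF) j D :
  HasW (fun x y => V x y j) D -> forall x y, wirt V x y j = D x y.
Proof.
  intros (Fx&Fy&HF&EF) x y. rewrite EF. destruct (HF x y) as (A1&A2&A3&A4).
  unfold wirt. rewrite (pd1_eq _ _ _ _ A1), (pd1_eq _ _ _ _ A2), (pd2_eq _ _ _ _ A3),
    (pd2_eq _ _ _ _ A4).
  unfold wirt_of. cx_field.
Qed.

Lemma wirt_congr (V W : VF) j x y :
  (forall a b, V a b j = W a b j) -> wirt V x y j = wirt W x y j.
Proof.
  intro H. unfold wirt.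
  replace (fun a b => re (V a b j)) with (fun a b => re (W a b j)).
  replace (fun a b => im (V a b j)) with (fun a b => im (W a b j)). reflexivity.
  all: apply functional_extensionality; intro; apply functional_extensionality; intro;
    rewrite H; auto.
Qed.

Definition dqk N (k i : nat) x y : Cx :=
  (rinv x y * rinv x y * qk N x y (S k) i + natC N * xim x y * rinv x y * qk N x y k i)%cx.

(* The case k = 0, cleared of the denominators rho. *)
Lemma dq0_cleared N x y i :
  (rhoC x y * rhoC x y *
     (binC N i * match i with O => Cx0 | S m => natC (S m) * Cxpow (xip x y) m end)
   = Xop N x y (q0 N x y) i + natC N * xim x y * rhoC x y * q0 N x y i)%cx.
Proof.
  unfold Xop, Jm, Jz, Jp, q0, rhoC. destruct i as [|j]; simpl shift; simpl Cxpow.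
  - pose proof (binC_ratio N 0) as H. rewrite natC_0 in *.
    eapply eq_by_vanishing_combination
      with (c := (- xim x y * xim x y * xip x y)%cx) (d := Cx0) (s := Cx0) (t := Cx0);
      [exact H | reflexivity | unfold Cx2; ring].
  - pose proof (binC_ratio N j) as H1. pose proof (binC_ratio N (S j)) as H2.
    rewrite ?natC_S in *.
    eapply eq_by_vanishing_combination with (c := (- Cxpow (xip x y) j)%cx)
        (d := (- xim x y * xim x y * xip x y * xip x y * Cxpow (xip x y) j)%cx);
      [exact H1 | exact H2 | unfold Cx2; ring].
Qed.

Lemma divide_by_rho2 x y a X Q c : (rhoC x y * rhoC x y * a = X + c * rhoC x y * Q)%cx ->
  a = (rinv x y * rinv x y * X + c * rinv x y * Q)%cx.
Proof.
  intro E. pose proof (rinv_rho x y) as R.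
  transitivity (rinv x y * rinv x y * (rhoC x y * rhoC x y * a))%cx.
  - transitivity ((rinv x y * rhoC x y) * (rinv x y * rhoC x y) * a)%cx. rewrite R; ring. ring.
  - rewrite E.
    transitivity (rinv x y * rinv x y * X + c * (rinv x y * rhoC x y) * rinv x y * Q)%cx.
    ring. rewrite R. ring.
Qed.

Lemma HasW_q0 N i : HasW (fun x y => q0 N x y i) (dqk N 0 i).
Proof.
  unfold q0. destruct i as [|m].
  - simpl Cxpow. eapply HasW_ext. apply HasW_const. intros x y. unfold dqk. simpl qk.
    pose proof (dq0_cleared N x y 0) as E. apply divide_by_rho2 in E.
    rewrite <- E. unfold q0. ring.
  - eapply HasW_ext. apply HasW_cmul. apply HasW_xi_pow. intros x y. unfold dqk. simpl qk.
    pose proof (dq0_cleared N x y (S m)) as E. apply divide_by_rho2 in E. exact E.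
Qed.

(* X has antiholomorphic coefficients, hence commutes with the Wirtinger derivative. *)
Lemma HasW_Xop N (P DP : R -> R -> Vec) :
  (forall i, HasW (fun x y => P x y i) (fun x y => DP x y i)) ->
  forall i, HasW (fun x y => Xop N x y (P x y) i) (fun x y => Xop N x y (DP x y) i).
Proof.
  intros H i. unfold Xop, Jm, Jz, Jp. destruct i; simpl shift;
  (eapply HasW_ext; [ apply HasW_sub; [apply HasW_sub|];
    [ apply HasW_cmul; first [apply HasW_const | apply H]
    | apply HasW_mul; [apply HasW_xibar | apply HasW_cmul; apply H]
    | apply HasW_mul; [apply HasW_mul; apply HasW_xibar | apply HasW_cmul; apply H]]
   | intros x y; cbv beta; ring]).
Qed.

Lemma HasW_qk N k i : HasW (fun x y => qk N x y k i) (dqk N k i).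
Proof.
  revert i. induction k; intro i.
  - apply HasW_q0.
  - simpl qk. eapply HasW_ext.
    { apply (HasW_Xop N (fun x y => qk N x y k) (fun x y j => dqk N k j x y)). exact IHk. }
    intros x y. cbv beta.
    rewrite (Xop_ext N x y (fun j => dqk N k j x y)
      (fun j => (rinv x y * rinv x y) * qk N x y (S k) j
                + (natC N * xim x y * rinv x y) * qk N x y k j)%cx).
    + rewrite Xop_lin. unfold dqk. simpl qk. ring.
    + intros; unfold dqk; ring.
Qed.

(** * The normalised vectors F_k and the Veronese sequence *)

Fixpoint rinv2pow (k : nat) (x y : R) : Cx :=
  match k with O => Cx1 | S m => (rinv x y * rinv x y * rinv2pow m x y)%cx end.

Lemma rinv2pow_nz k x y : rinv2pow k x y <> Cx0.
Proof.
  induction k; simpl. intro E; apply (f_equal re) in E; simpl in E; lra.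
  repeat apply mul_nz; auto; apply rinv_nz.
Qed.

Lemma HasW_rinv2pow k :
  HasW (rinv2pow k) (fun x y => - Cx2 * natC k * xim x y * rinv x y * rinv2pow k x y)%cx.
Proof.
  induction k.
  - simpl. eapply HasW_ext. apply HasW_const. intros; rewrite natC_0; ring.
  - simpl. eapply HasW_ext. apply HasW_mul. apply HasW_mul; apply HasW_rinv. exact IHk.
    intros x y. simpl. rewrite natC_S. unfold Cx2. ring.
Qed.

(* C(N,i)^(-1/2), converting rescaled coordinates back to the standard ones. *)
Definition invsqrt_bin N i : Cx := RtoCx (/ sqrt (bin N i)).

Lemma invsqrt_bin_nz N l : (l <= N)%nat -> invsqrt_bin N l <> Cx0.
Proof.
  intros H E. apply (f_equal re) in E. unfold invsqrt_bin in E. simpl in E.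
  pose proof (sqrt_lt_R0 _ (bin_pos N l H)). pose proof (Rinv_0_lt_compat _ H0). lra.
Qed.

Lemma invsqrt_bin_sq N l : (l <= N)%nat ->
  (Cxconj (invsqrt_bin N l) * invsqrt_bin N l = wt N l)%cx.
Proof.
  intro H. pose proof (bin_pos N l H) as P. unfold invsqrt_bin, wt.
  cx_unfold. apply Cx_ext; simpl; [|ring].
  rewrite Rmult_0_r, Rminus_0_r, <- Rinv_mult, sqrt_sqrt; lra.
Qed.

Definition Fk N k : VF := fun x y i => (invsqrt_bin N i * rinv2pow k x y * qk N x y k i)%cx.

Lemma HasW_Fk N k i : HasW (fun x y => Fk N k x y i)
  (fun x y => Fk N (S k) x y i + (natC N - Cx2 * natC k) * xim x y * rinv x y * Fk N k x y i)%cx.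
Proof.
  unfold Fk. eapply HasW_ext.
  - apply HasW_mul. apply HasW_cmul. apply HasW_rinv2pow. apply HasW_qk.
  - intros x y. unfold dqk. simpl rinv2pow. ring.
Qed.

Lemma Fk_orthogonal N k x y :
  csum N (fun l => Cxconj (Fk N k x y l) * Fk N (S k) x y l)%cx = Cx0.
Proof.
  transitivity (Cxconj (rinv2pow k x y) * rinv2pow (S k) x y
                * wip N (qk N x y k) (qk N x y (S k)))%cx.
  - unfold wip. rewrite <- csum_scal. apply csum_ext. intros l Hl. unfold Fk.
    rewrite !conj_mul, <- (invsqrt_bin_sq N l Hl). ring.
  - rewrite qk_orthogonal. ring.
Qed.

Lemma vnorm2_ge n v : 0 <= re (vnorm2 n v) /\
  forall l, (l <= n)%nat -> re (v l) * re (v l) + im (v l) * im (v l) <= re (vnorm2 n v).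
Proof.
  induction n; unfold vnorm2 in *; simpl.
  - split. nra. intros l Hl. assert (l = 0%nat) by lia. subst. lra.
  - destruct IHn as [A B]. split. nra. intros l Hl.
    destruct (Nat.eq_dec l (S n)). subst. nra. specialize (B l ltac:(lia)). nra.
Qed.

Lemma vnorm2_zero n v : vnorm2 n v = Cx0 -> forall l, (l <= n)%nat -> v l = Cx0.
Proof.
  intros H l Hl. destruct (vnorm2_ge n v) as [_ B]. specialize (B l Hl).
  rewrite H in B. simpl in B. apply Cx_ext; simpl; nra.
Qed.

Lemma vnorm2_Fk_nz N x y k : (k <= N)%nat -> vnorm2 N (Fk N k x y) <> Cx0.
Proof.
  intros Hk E. destruct (qk_nz N x y k Hk) as [l [Hl Hq]].
  pose proof (vnorm2_zero N _ E l Hl) as F. unfold Fk in F. revert F.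
  repeat apply mul_nz; auto using invsqrt_bin_nz, rinv2pow_nz.
Qed.

Lemma proj_ext n v w i j : (forall l, (l <= n)%nat -> v l = w l) ->
  (i <= n)%nat -> (j <= n)%nat -> proj n v i j = proj n w i j.
Proof.
  intros H Hi Hj. unfold proj. unfold vnorm2. rewrite (csum_ext n _ (fun l => Cxconj (w l) * w l)%cx).
  - rewrite H, H by auto. reflexivity.
  - intros l Hl. rewrite H by auto. reflexivity.
Qed.

Lemma f0_eq_F0 N x y i : (i <= N)%nat -> f0 N x y i = Fk N 0 x y i.
Proof.
  intro H. unfold f0, Fk, invsqrt_bin. simpl rinv2pow. simpl qk. unfold q0, binC.
  pose proof (bin_pos N i H) as P.
  unfold bin in *. destruct (Nat.leb_spec i N); [|lia].
  assert (Q : sqrt (Binomial.C N i) = / sqrt (Binomial.C N i) * Binomial.C N i).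
  { pose proof (sqrt_lt_R0 _ P). rewrite <- (sqrt_sqrt (Binomial.C N i)) at 3 by lra.
    field. lra. }
  rewrite Q at 1. cx_ring.
Qed.

Lemma gram_schmidt_step N (F G : Vec) (beta : Cx) i : (i <= N)%nat ->
  csum N (fun l => Cxconj (F l) * G l)%cx = Cx0 ->
  mvec N (msub idm (proj N F)) (fun l => G l + beta * F l)%cx i = G i.
Proof.
  intros Hi Horth. unfold mvec, msub.
  set (n := vnorm2 N F).
  rewrite (csum_ext N _ (fun l => idm i l * (G l + beta * F l) -
       (F i * Cxinv n) * (Cxconj (F l) * G l + beta * (Cxconj (F l) * F l)))%cx).
  - rewrite csum_sub, csum_idm by exact Hi. rewrite csum_scal, csum_add, csum_scal, Horth.
    fold (vnorm2 N F). fold n.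
    destruct (classic (n = Cx0)) as [E|E].
    + rewrite (vnorm2_zero N _ E i Hi). ring.
    + transitivity (G i + beta * F i * (Cx1 - Cxinv n * n))%cx. ring.
      rewrite Cxinv_l by exact E. ring.
  - intros l Hl. unfold proj, Cxdiv. fold n. ring.
Qed.

Lemma fseq_eq_Fk N k x y i : (i <= N)%nat -> fseq N k x y i = Fk N k x y i.
Proof.
  revert x y i. induction k; intros x y i Hi.
  - apply f0_eq_F0, Hi.
  - simpl fseq.
    rewrite <- (gram_schmidt_step N (Fk N k x y) (Fk N (S k) x y)
      ((natC N - Cx2 * natC k) * xim x y * rinv x y)%cx i Hi (Fk_orthogonal N k x y)).
    unfold mvec, msub. apply csum_ext. intros l Hl.
    rewrite (proj_ext N (fseq N k x y) (Fk N k x y) i l) by auto.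
    rewrite (wirt_congr (fseq N k) (Fk N k) l x y) by (intros; apply IHk; exact Hl).
    rewrite (wirt_HasW (Fk N k) l _ (HasW_Fk N k l) x y). ring.
Qed.

Lemma Pk_eq_proj_Fk N k x y i j : (i <= N)%nat -> (j <= N)%nat ->
  Pk N k x y i j = proj N (Fk N k x y) i j.
Proof. intros Hi Hj. unfold Pk. apply proj_ext; auto. intros; apply fseq_eq_Fk; auto. Qed.

(* The entries of sigma^+ and sigma^- are sqrt((N - i) (i + 1)); in the rescaled
   coordinates they become the rational coefficients of Jm and Jp. *)
Lemma sqrt_ratio a c b0 b1 : 0 < a -> 0 < c -> 0 < b0 -> 0 < b1 -> a * b0 = c * b1 ->
  sqrt (a * c) * / sqrt b0 = a * / sqrt b1 /\ sqrt (a * c) * / sqrt b1 = c * / sqrt b0.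
Proof.
  intros Ha Hc H0 H1 E.
  assert (B1 : b1 = a * b0 / c) by (rewrite E; field; lra).
  split.
  - rewrite <- (sqrt_square a) at 2 by lra.
    rewrite <- !Rdiv_def, <- !sqrt_div_alt by lra. f_equal. rewrite B1. field. lra.
  - rewrite <- (sqrt_square c) at 2 by lra.
    rewrite <- !Rdiv_def, <- !sqrt_div_alt by lra. f_equal. rewrite B1. field. lra.
Qed.

Lemma spin_entry_rescaled N m : (m < N)%nat ->
  sqrt ((INR N - INR (S m) + 1) * INR (S m)) * / sqrt (bin N m)
    = (INR N - INR m) * / sqrt (bin N (S m)) /\
  sqrt ((INR N - INR (S m) + 1) * INR (S m)) * / sqrt (bin N (S m))
    = INR (S m) * / sqrt (bin N m).
Proof.
  intro H. replace (INR N - INR (S m) + 1) with (INR N - INR m) by (rewrite S_INR; ring).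
  apply sqrt_ratio.
  - apply lt_INR in H. lra.
  - apply lt_0_INR; lia.
  - apply bin_pos; lia.
  - apply bin_pos; lia.
  - rewrite bin_ratio, S_INR. ring.
Qed.

Definition sigm_apply N (v : Vec) i : Cx := match i with O => Cx0
  | S m => (RtoCx (sqrt ((INR N - INR (S m) + 1) * INR (S m))) * v m)%cx end.
Definition sigp_apply N (v : Vec) i : Cx := if (S i <=? N)%nat then
  (RtoCx (sqrt ((INR N - INR (S i) + 1) * INR (S i))) * v (S i))%cx else Cx0.

Lemma sigma_z_row N v i : (i <= N)%nat ->
  csum N (fun l => sigma_z N i l * v l)%cx = (RtoCx (INR N / 2 - INR i) * v i)%cx.
Proof.
  intro H.
  transitivity (csum N (fun l => if Nat.eqb i l then (RtoCx (INR N / 2 - INR l) * v l)%cx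
                                 else Cx0)).
  - apply csum_ext. intros l _. unfold sigma_z. destruct (Nat.eqb_spec i l); subst; ring.
  - rewrite csum_delta. destruct (Nat.leb_spec i N); [reflexivity|lia].
Qed.

Lemma sigma_minus_row N v i : (i <= N)%nat ->
  csum N (fun l => sigma_minus N i l * v l)%cx = sigm_apply N v i.
Proof.
  intro H. destruct i as [|m].
  - apply csum_zero. intros l _. unfold sigma_minus. simpl. ring.
  - transitivity (csum N (fun l => if Nat.eqb m l then
        (RtoCx (sqrt ((INR N - INR (S m) + 1) * INR (S m))) * v l)%cx else Cx0)).
    + apply csum_ext. intros l _. unfold sigma_minus. simpl Nat.eqb.
      destruct (Nat.eqb_spec m l); subst; ring.
    + rewrite csum_delta. destruct (Nat.leb_spec m N); [reflexivity|lia].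
Qed.

Lemma sigma_plus_row N v i : csum N (fun l => sigma_plus N i l * v l)%cx = sigp_apply N v i.
Proof.
  transitivity (csum N (fun l => if Nat.eqb (S i) l then
        (RtoCx (sqrt ((INR N - INR l + 1) * INR l)) * v l)%cx else Cx0)).
  - apply csum_ext. intros l _. unfold sigma_plus. destruct (Nat.eqb (S i) l); ring.
  - rewrite csum_delta. reflexivity.
Qed.

Lemma inv_rhoC x y : Cxinv (Cxadd Cx1 (Cxmul (xip x y) (xim x y))) = rinv x y.
Proof.
  unfold rinv. pose proof (rho_pos x y). unfold rho in *.
  cx_unfold. apply Cx_ext; simpl; field; nra.
Qed.

Lemma S_plus_apply N x y v i : (i <= N)%nat ->
  mvec N (S_plus N x y) v i =
  (rinv x y * (xim x y * (natC N - Cx2 * natC i) * v i - sigm_apply N v i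
               + xim x y * xim x y * sigp_apply N v i))%cx.
Proof.
  intro H. unfold mvec, S_plus, mscal, madd, msub.
  set (iv := Cxinv (Cxadd Cx1 (Cxmul (xip x y) (xim x y)))).
  transitivity (csum N (fun l => (iv * (RtoCx 2 * xim x y)) * (sigma_z N i l * v l)
     + (- iv) * (sigma_minus N i l * v l)
     + (iv * (xim x y * xim x y)) * (sigma_plus N i l * v l))%cx).
  - apply csum_ext. intros l _. simpl Cxpow. ring.
  - rewrite csum_lin3, sigma_z_row, sigma_minus_row, sigma_plus_row by exact H.
    subst iv. rewrite inv_rhoC.
    unfold natC, Cx2. cx_unfold. apply Cx_ext; simpl; field; apply Rgt_not_eq, rho_pos.
Qed.

Lemma S_minus_apply N x y v i : (i <= N)%nat ->
  mvec N (S_minus N x y) v i =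
  (rinv x y * (xip x y * (natC N - Cx2 * natC i) * v i
               + xip x y * xip x y * sigm_apply N v i - sigp_apply N v i))%cx.
Proof.
  intro H. unfold mvec, S_minus, mscal, madd, msub.
  set (iv := Cxinv (Cxadd Cx1 (Cxmul (xip x y) (xim x y)))).
  transitivity (csum N (fun l => (iv * (RtoCx 2 * xip x y)) * (sigma_z N i l * v l)
     + (iv * (xip x y * xip x y)) * (sigma_minus N i l * v l)
     + (- iv) * (sigma_plus N i l * v l))%cx).
  - apply csum_ext. intros l _. simpl Cxpow. ring.
  - rewrite csum_lin3, sigma_z_row, sigma_minus_row, sigma_plus_row by exact H.
    subst iv. rewrite inv_rhoC.
    unfold natC, Cx2. cx_unfold. apply Cx_ext; simpl; field; apply Rgt_not_eq, rho_pos.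
Qed.

Lemma sigm_rescaled N (q : Vec) e i : (i <= N)%nat ->
  sigm_apply N (fun l => invsqrt_bin N l * e * q l)%cx i = (invsqrt_bin N i * e * Jm N q i)%cx.
Proof.
  intro H. unfold sigm_apply, Jm. destruct i as [|m]; simpl shift. ring.
  destruct (spin_entry_rescaled N m ltac:(lia)) as [L1 _].
  transitivity (RtoCx (sqrt ((INR N - INR (S m) + 1) * INR (S m)) * / sqrt (bin N m))
                * e * q m)%cx.
  unfold invsqrt_bin. cx_ring. rewrite L1. unfold invsqrt_bin, natC. rewrite S_INR. cx_ring.
Qed.

Lemma sigp_rescaled N (q : Vec) e i : (i <= N)%nat -> q (S N) = Cx0 ->
  sigp_apply N (fun l => invsqrt_bin N l * e * q l)%cx i = (invsqrt_bin N i * e * Jp q i)%cx.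
Proof.
  intros H Hq. unfold sigp_apply, Jp. destruct (Nat.leb_spec (S i) N).
  - destruct (spin_entry_rescaled N i ltac:(lia)) as [_ L2].
    transitivity (RtoCx (sqrt ((INR N - INR (S i) + 1) * INR (S i)) * / sqrt (bin N (S i)))
                  * e * q (S i))%cx.
    unfold invsqrt_bin. cx_ring. rewrite L2. unfold invsqrt_bin, natC. rewrite S_INR. cx_ring.
  - assert (i = N) by lia. subst. rewrite Hq. ring.
Qed.

Lemma S_plus_Fk N k x y i : (i <= N)%nat ->
  mvec N (S_plus N x y) (Fk N k x y) i = (- rhoC x y * Fk N (S k) x y i)%cx.
Proof.
  intro H. rewrite S_plus_apply by exact H. unfold Fk.
  rewrite sigm_rescaled, sigp_rescaled by (try exact H; apply qk_supp; lia).
  cbv beta. simpl rinv2pow. simpl qk. unfold Xop, Jz.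
  transitivity (- (rhoC x y * rinv x y) * (rinv x y * (invsqrt_bin N i * rinv2pow k x y *
     (Jm N (qk N x y k) i - xim x y * ((natC N - Cx2 * natC i) * qk N x y k i)
      - xim x y * xim x y * Jp (qk N x y k) i))))%cx.
  - replace (rhoC x y * rinv x y)%cx with Cx1 by (rewrite <- (rinv_rho x y); ring). ring.
  - ring.
Qed.

Lemma S_minus_Fk N k x y i : (i <= N)%nat ->
  mvec N (S_minus N x y) (Fk N (S k) x y) i = (cY N k * rinv x y * Fk N k x y i)%cx.
Proof.
  intro H. rewrite S_minus_apply by exact H. unfold Fk.
  rewrite sigm_rescaled, sigp_rescaled by (try exact H; apply qk_supp; lia).
  cbv beta.
  transitivity (rinv x y * invsqrt_bin N i * rinv2pow (S k) x y * Yop N x y (qk N x y (S k)) i)%cx.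
  - unfold Yop, Jz. ring.
  - rewrite Y_qk. simpl rinv2pow.
    transitivity (cY N k * rinv x y * (invsqrt_bin N i * rinv2pow k x y * qk N x y k i) *
       (rinv x y * rhoC x y) * (rinv x y * rhoC x y))%cx. ring.
    rewrite rinv_rho. ring.
Qed.

Lemma S_minus_adjoint N x y l m : S_minus N x y l m = Cxconj (S_plus N x y m l).
Proof.
  unfold S_minus, S_plus, mscal, madd, msub. rewrite !inv_rhoC.
  unfold sigma_z, sigma_plus, sigma_minus.
  rewrite (Nat.eqb_sym l m), (Nat.eqb_sym l (S m)), (Nat.eqb_sym (S l) m).
  unfold rinv. simpl Cxpow.
  destruct (Nat.eqb_spec m l), (Nat.eqb_spec (S m) l), (Nat.eqb_spec m (S l)); try lia; subst;
    cx_unfold; apply Cx_ext; simpl; field; apply Rgt_not_eq, rho_pos.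
Qed.

Lemma S_plus_adjoint N x y l m : S_plus N x y l m = Cxconj (S_minus N x y m l).
Proof. rewrite S_minus_adjoint, conj_conj. reflexivity. Qed.

Lemma conj_proj_entry N A Bm P v i j :
  (forall l m, (l <= N)%nat -> (m <= N)%nat -> P l m = proj N v l m) ->
  (forall l m, Bm l m = Cxconj (A m l)) ->
  (i <= N)%nat ->
  mmul N (mmul N A P) Bm i j =
  (mvec N A v i * Cxconj (mvec N A v j) * Cxinv (vnorm2 N v))%cx.
Proof.
  intros HP HB Hi. unfold mmul.
  rewrite (csum_ext N _ (fun m => (mvec N A v i * Cxinv (vnorm2 N v)) * (Cxconj (v m) * Bm m j))%cx).
  - rewrite csum_scal. unfold mvec. rewrite csum_conj.
    rewrite (csum_ext N (fun m => Cxconj (v m) * Bm m j)%cx (fun m => Cxconj (A j m * v m))%cx).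
    + ring.
    + intros m _. rewrite HB, conj_mul. ring.
  - intros m Hm.
    rewrite (csum_ext N _ (fun l => (Cxconj (v m) * Cxinv (vnorm2 N v)) * (A i l * v l))%cx).
    + rewrite csum_scal. unfold mvec. ring.
    + intros l Hl. rewrite HP by auto. unfold proj, Cxdiv. ring.
Qed.

(* If A v = c w with c, v, w nonzero, then A P_v A^dagger is a nonzero multiple of P_w,
   the factor being its trace |c|^2 |w|^2 / |v|^2. *)
Lemma conjugated_projector N A Bm P Q v w c :
  (forall l m, (l <= N)%nat -> (m <= N)%nat -> P l m = proj N v l m) ->
  (forall l m, (l <= N)%nat -> (m <= N)%nat -> Q l m = proj N w l m) ->
  (forall l m, Bm l m = Cxconj (A m l)) ->
  (forall l, (l <= N)%nat -> mvec N A v l = (c * w l)%cx) ->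
  c <> Cx0 -> vnorm2 N v <> Cx0 -> vnorm2 N w <> Cx0 ->
  mtr N (mmul N (mmul N A P) Bm) <> Cx0 /\
  forall i j, (i <= N)%nat -> (j <= N)%nat ->
    Q i j = Cxdiv (mmul N (mmul N A P) Bm i j) (mtr N (mmul N (mmul N A P) Bm)).
Proof.
  intros HP HQ HB Hu Hc Hv Hw.
  set (d := (Cxconj c * c * vnorm2 N w * Cxinv (vnorm2 N v))%cx).
  assert (Trace : mtr N (mmul N (mmul N A P) Bm) = d).
  { unfold mtr, d.
    rewrite (csum_ext N _ (fun l => (Cxconj c * c * Cxinv (vnorm2 N v))
                                    * (Cxconj (w l) * w l))%cx).
    - rewrite csum_scal. unfold vnorm2. ring.
    - intros l Hl. rewrite (conj_proj_entry N A Bm P v l l HP HB Hl), Hu by exact Hl.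
      rewrite conj_mul. ring. }
  assert (Hd : d <> Cx0).
  { unfold d. repeat apply mul_nz; auto using conj_nz, inv_nz. }
  rewrite Trace. split; [exact Hd|]. intros i j Hi Hj.
  rewrite HQ, (conj_proj_entry N A Bm P v i j HP HB Hi), !Hu by assumption.
  unfold proj, Cxdiv.
  transitivity (w i * Cxconj (w j) * Cxinv (vnorm2 N w) * (Cxinv d * d))%cx.
  - rewrite Cxinv_l by exact Hd. ring.
  - unfold d. rewrite conj_mul.
    transitivity (w i * Cxconj (w j) * Cxinv (Cxconj c * c * vnorm2 N w * Cxinv (vnorm2 N v))
      * Cxconj c * c * (Cxinv (vnorm2 N w) * vnorm2 N w) * Cxinv (vnorm2 N v))%cx. ring.
    rewrite Cxinv_l by exact Hw. ring.
Qed.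

Theorem mainTheorem9 (N : nat) (HN : (1 <= N)%nat) (x y : R) :
  (forall k : nat, (k <= N - 1)%nat ->
     mtr N (mmul N (mmul N (S_plus N x y) (Pk N k x y)) (S_minus N x y)) <> Cx0 /\
     forall i j : nat, (i <= N)%nat -> (j <= N)%nat ->
       Pk N (S k) x y i j =
       Cxdiv (mmul N (mmul N (S_plus N x y) (Pk N k x y)) (S_minus N x y) i j)
             (mtr N (mmul N (mmul N (S_plus N x y) (Pk N k x y)) (S_minus N x y)))) /\
  (forall k : nat, (1 <= k)%nat -> (k <= N)%nat ->
     mtr N (mmul N (mmul N (S_minus N x y) (Pk N k x y)) (S_plus N x y)) <> Cx0 /\
     forall i j : nat, (i <= N)%nat -> (j <= N)%nat ->
       Pk N (k - 1) x y i j =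
       Cxdiv (mmul N (mmul N (S_minus N x y) (Pk N k x y)) (S_plus N x y) i j)
             (mtr N (mmul N (mmul N (S_minus N x y) (Pk N k x y)) (S_plus N x y)))).
Proof.
  split.
  - (* S^+ f_k = -rho f_(k+1) *)
    intros k Hk.
    apply (conjugated_projector N _ _ _ _ (Fk N k x y) (Fk N (S k) x y) (- rhoC x y)%cx);
      auto using Pk_eq_proj_Fk, S_minus_adjoint, S_plus_Fk, opp_nz, rhoC_nz;
      apply vnorm2_Fk_nz; lia.
  - (* S^- f_k = c_(k-1) rho^-1 f_(k-1) *)
    intros k Hk1 Hk. destruct k as [|k]; [lia|]. replace (S k - 1)%nat with k by lia.
    assert (Hc : (cY N k * rinv x y)%cx <> Cx0)
      by (apply mul_nz; [apply cY_nz; lia | apply rinv_nz]).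
    apply (conjugated_projector N _ _ _ _ (Fk N (S k) x y) (Fk N k x y) (cY N k * rinv x y)%cx);
      auto using Pk_eq_proj_Fk, S_plus_adjoint, S_minus_Fk;
      apply vnorm2_Fk_nz; lia.
Qed.
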